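(* Let $N\ge 2$, $\xi>0$, and consider the system of $N$ agents in the plane in which each agent interacts (by attraction and repulsion, isotropically) only with its single closest neighbor, i.e. $\dot x=f(x)$ with $f$ as in the context. Let $x^*\in(\mathbb{R}^2)^N\setminus S$. If for all $i\in\{1,\dots,N\}$ and all $k\in\mathcal{N}_i(x^* )$ it holds that $\|x^*_i-x^*_k\|=\xi$, then $x^*$ is a Filippov equilibrium of this system, i.e. $0\in K f(x^* )$, and moreover $1\le|\mathcal{N}_i(x^* )|\le 6$ for all $i\in\{1,\dots,N\}$.
   Context: Configurations are $x=(x_1,\dots,x_N)\in(\mathbb{R}^2)^N$, where $x_i$ is the position of agent $i$, and $\|\cdot\|$ is the Euclidean norm on $\mathbb{R}^2$. The set of degenerate configurations is $S=\{x: \exists\, i\neq j \text{ with } x_i=x_j\}$, and the set of switching configurations is $D=\{x:\exists\, i,j,k \text{ with } j\ne k,\ j,k\neq i,\ \|x_i-x_j\|=\|x_i-x_k\|\}$. For any configuration $x\notin S$, $\mathcal{N}_i(x)=\arg\min_{j\neq i}\|x_i-x_j\|$ is the (possibly multivalued) set of closest neighbors of agent $i$, and $|\mathcal{N}_i(x)|$ its cardinality. For $x\notin D\cup S$, $\mathcal{N}_i(x)=\{c_i(x)\}$ is a singleton and the vector field $f:(\mathbb{R}^2)^N\setminus(D\cup S)\to(\mathbb{R}^2)^N$ is defined componentwise by $$f_i(x)=\big(x_{c_i(x)}-x_i\big)-\xi^2\,\frac{x_{c_i(x)}-x_i}{\|x_{c_i(x)}-x_i\|^2},\qquad i=1,\dots,N.$$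 For $y\in(\mathbb{R}^2)^N$, $K f(y)=\bigcap_{\delta>0}\bigcap_{\mu(\Lambda)=0}\overline{\mathrm{co}}\{f(B(y,\delta)\setminus\Lambda)\}$, where $B(y,\delta)$ is the open Euclidean ball of radius $\delta$ about $y$, $\overline{\mathrm{co}}$ is the closed convex hull, $\mu$ is Lebesgue measure, and the inner intersection ranges over Lebesgue-null sets $\Lambda$ (points where $f$ is undefined are discarded). A configuration $x^*$ is a Filippov equilibrium if $0\in K f(x^* )$. *)

From mathcomp Require Import all_boot all_order all_algebra.
From mathcomp Require Import reals.
Set Implicit Arguments. Unset Strict Implicit. Unset Printing Implicit Defensive.
Import Order.TTheory GRing.Theory Num.Theory.
Local Open Scope ring_scope.

Section Defs.
Variable R : realType.

Definition pt := (R * R)%type.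
Definition config (N : nat) := 'I_N -> pt.

Definition pdist (p q : pt) : R :=
  Num.sqrt ((p.1 - q.1) ^+ 2 + (p.2 - q.2) ^+ 2).

Definition cdist N (x y : config N) : R :=
  Num.sqrt (\sum_(i < N) (((x i).1 - (y i).1) ^+ 2 + ((x i).2 - (y i).2) ^+ 2)).

Definition cball N (y : config N) (delta : R) : config N -> Prop :=
  fun z => cdist z y < delta.

Definition degenerate N (x : config N) : Prop :=
  exists i j : 'I_N, i <> j /\ x i = x j.

Definition switching N (x : config N) : Prop :=
  exists i j k : 'I_N, j <> k /\ j <> i /\ k <> i /\
    pdist (x i) (x j) = pdist (x i) (x k).

Definition nbrs N (x : config N) (i : 'I_N) : {set 'I_N} :=
  [set j | (j != i) &&
     [forall k, (k != i) ==> (pdist (x i) (x j) <= pdist (x i) (x k))]].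

(* the vector field f; c_i(x) is taken as the (unique, for x outside D u S)
   element of N_i(x).  Only used on configurations outside D u S. *)
Definition fvec N (xi : R) (x : config N) : config N :=
  fun i =>
    let c := odflt i [pick j in nbrs x i] in
    let v := ((x c).1 - (x i).1, (x c).2 - (x i).2) in
    let n2 := v.1 ^+ 2 + v.2 ^+ 2 in
    (v.1 - xi ^+ 2 * v.1 / n2, v.2 - xi ^+ 2 * v.2 / n2).

(* Lebesgue-null subsets of (R^2)^N = R^(2N): for every eps > 0 they are
   covered by countably many closed boxes [a_n, b_n] of total volume < eps. *)
Definition in_box N (a b : config N) (z : config N) : Prop :=
  forall i, (a i).1 <= (z i).1 <= (b i).1 /\ (a i).2 <= (z i).2 <= (b i).2.

Definition box_vol N (a b : config N) : R :=
  \prod_(i < N) (((b i).1 - (a i).1) * ((b i).2 - (a i).2)).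

Definition null_set N (L : config N -> Prop) : Prop :=
  forall eps : R, 0 < eps ->
    exists (a b : nat -> config N),
      (forall n i, (a n i).1 <= (b n i).1 /\ (a n i).2 <= (b n i).2) /\
      (forall z, L z -> exists n, in_box (a n) (b n) z) /\
      (forall M : nat, \sum_(n < M) box_vol (a n) (b n) < eps).

Definition conv_comb N (n : nat) (w : 'I_n -> R) (p : 'I_n -> config N)
  : config N :=
  fun i => (\sum_(k < n) w k * (p k i).1, \sum_(k < n) w k * (p k i).2).

Definition closed_conv_hull N (A : config N -> Prop) : config N -> Prop :=
  fun y => forall eps : R, 0 < eps ->
    exists (n : nat) (w : 'I_n -> R) (p : 'I_n -> config N),
      (forall k, 0 <= w k) /\ \sum_(k < n) w k = 1 /\
      (forall k, A (p k)) /\ cdist y (conv_comb w p) < eps.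

(* Filippov set-valued map K f (y); points of D u S, where f is undefined,
   are discarded *)
Definition filippov_K N (xi : R) (y : config N) : config N -> Prop :=
  fun v => forall delta : R, 0 < delta ->
    forall L : config N -> Prop, null_set L ->
      closed_conv_hull
        (fun u => exists z, cball y delta z /\ ~ L z /\
                    ~ switching z /\ ~ degenerate z /\ u = fvec xi z) v.

Definition config0 N : config N := fun _ => (0, 0).

Definition filippov_equilibrium N (xi : R) (x : config N) : Prop :=
  filippov_K xi x (@config0 N).

End Defs.

(* Filippov's set [K f (x)] is an intersection, over [delta > 0] and null sets [L],
   of closed convex hulls of values of [f] on [B(x, delta) \ L], so [0 \in K f (x)]
   follows once we find, arbitrarily close to [x] and outside any null set, a
   configuration [z] outside [D u S] with [f z] arbitrarily small.
   Such regular points exist near any configuration: moving agent [i] horizontally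
   by [s * 2^i] breaks every tie for small [s > 0] (each tie defect is a quadratic
   in [s] with nonzero leading coefficient), ties then stay broken on a whole box,
   and a box of positive volume is not null.
   At such a [z] near [x], the nearest neighbour of agent [i] is at squared
   distance [d] close to [xi^2], because in [x] all nearest neighbours are at
   distance [xi] and nobody is closer; hence [|f_i z|^2 = (d - xi^2)^2 / d] is small.
   The bound 6 is the kissing-number argument: the nearest neighbours of [x_i] lie
   on the circle of radius [xi] about [x_i] and are pairwise at least [xi] apart,
   so no two of them lie in the same half-open 60-degree sector. *)

From Pilot Require Import Defs.
From mathcomp Require Import all_boot all_order all_algebra.
From mathcomp Require Import all_classical all_reals all_analysis.
From mathcomp Require Import measurable_realfun.
From mathcomp Require Import ring lra zify.
(* so that [null_set] is the one of Defs and not the measure-theoretic one *)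
Import Defs.
Set Implicit Arguments. Unset Strict Implicit. Unset Printing Implicit Defensive.
Import Order.TTheory GRing.Theory Num.Theory.
Local Open Scope classical_set_scope.
Local Open Scope ring_scope.

Section SquaredDistance.
Variable R : realType.

Definition sqdist (p q : pt R) : R := (p.1 - q.1) ^+ 2 + (p.2 - q.2) ^+ 2.

Lemma sqdist_ge0 p q : 0 <= sqdist p q.
Proof. by rewrite addr_ge0 ?sqr_ge0. Qed.

Lemma ler_pdist p q p' q' : (pdist p q <= pdist p' q') = (sqdist p q <= sqdist p' q').
Proof. by rewrite ler_sqrt // sqdist_ge0. Qed.

Lemma eq_pdist p q p' q' : (pdist p q = pdist p' q') <-> (sqdist p q = sqdist p' q').
Proof.
rewrite /pdist -!/(sqdist _ _); split=> [/eqP|->] //.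
by rewrite eqr_sqrt ?sqdist_ge0 // => /eqP.
Qed.

Lemma pdist_sqdist p q (r : R) : 0 <= r -> pdist p q = r -> sqdist p q = r ^+ 2.
Proof. by move=> r0 <-; rewrite sqr_sqrtr // sqdist_ge0. Qed.

End SquaredDistance.

Section KissingNumber.
Variable R : realType.

(* With [s = sqrt 3] and [u] a unit vector, the hypotheses say that [a] and [b]
   lie in the half-open cone of angle 60 degrees starting at direction [u]:
   in the frame [(u, u^perp)], [a] has coordinates [(p, q)] with [0 <= q < s p]. *)
Lemma cone60_dot_gt (s u1 u2 a1 a2 b1 b2 r2 : R) :
  s ^+ 2 = 3 -> 0 < s -> u1 ^+ 2 + u2 ^+ 2 = 1 ->
  0 <= u1 * a2 - u2 * a1 < s * (u1 * a1 + u2 * a2) ->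
  0 <= u1 * b2 - u2 * b1 < s * (u1 * b1 + u2 * b2) ->
  a1 ^+ 2 + a2 ^+ 2 = r2 -> b1 ^+ 2 + b2 ^+ 2 = r2 -> 0 < r2 ->
  r2 < 2 * (a1 * b1 + a2 * b2).
Proof.
move=> s3 s0 hu /andP[qa pa] /andP[qb pb] ha hb r0.
set p := u1 * a1 + u2 * a2 in pa *; set q := u1 * a2 - u2 * a1 in qa pa *.
set p' := u1 * b1 + u2 * b2 in pb *; set q' := u1 * b2 - u2 * b1 in qb pb *.
have p_gt0 : 0 < p by rewrite -(pmulr_rgt0 _ s0); apply: le_lt_trans pa.
have p'_gt0 : 0 < p' by rewrite -(pmulr_rgt0 _ s0); apply: le_lt_trans pb.
have dot_frame : a1 * b1 + a2 * b2 = p * p' + q * q'.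
  by rewrite -[LHS]mulr1 -hu /p /p' /q /q'; ring.
have lagrange : (p * p' + q * q') ^+ 2 + (p' * q - q' * p) ^+ 2 = r2 ^+ 2.
  have -> : r2 ^+ 2 = (u1 ^+ 2 + u2 ^+ 2) ^+ 2 * (a1 ^+ 2 + a2 ^+ 2) * (b1 ^+ 2 + b2 ^+ 2).
    by rewrite hu ha hb expr1n mul1r.
  by rewrite /p /p' /q /q'; ring.
have dot_gt0 : 0 < p * p' + q * q'.
  by apply: ltr_pwDl; rewrite ?mulr_ge0 ?mulr_gt0.
(* the angle between [a] and [b] is less than 60 degrees: |tan| < sqrt 3 *)
have cross_lt : `|p' * q - q' * p| < s * (p * p' + q * q').
  have h1 : q * p' < s * p * p' by rewrite ltr_pM2r.
  have h2 : q' * p < s * p' * p by rewrite ltr_pM2r.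
  have h3 : 0 <= s * q * q' by rewrite !mulr_ge0 // ltW.
  rewrite ltr_norml; apply/andP; split; nra.
have cross_sq : (p' * q - q' * p) ^+ 2 < 3 * (p * p' + q * q') ^+ 2.
  rewrite -s3 -exprMn -real_normK ?num_real //.
  by rewrite ltrXn2r ?normr_ge0 // mulr_ge0 // ltW.
rewrite dot_frame; nra.
Qed.

(* The six half-open cones of angle 60 degrees starting at directions [k * 60]
   degrees; [s] stands for [sqrt 3], and [A = s * v.1] is kept as an atom so that
   membership is linear. *)
Definition in_sector (s : R) (k : nat) (v : pt R) : bool :=
  let A := s * v.1 in let b := v.2 in
  match k with
  | 0 => (0 <= b) && (b < A)
  | 1 => (A <= b) && (0 < A + b)
  | 2 => (b + A <= 0) && (0 < b)
  | 3 => (b <= 0) && (A < b)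
  | 4 => (b <= A) && (A + b < 0)
  | _ => (0 <= b + A) && (b < 0)
  end.

Lemma exists_sector s (v : pt R) : 0 < s -> v != (0, 0) ->
  exists k : 'I_6, in_sector s k v.
Proof.
move=> s0 v0; rewrite /in_sector; set A := s * v.1; set b := v.2.
have Ab0 : b = 0 -> A != 0.
  move=> b0; apply/eqP => /eqP; rewrite mulf_eq0 gt_eqF //= => /eqP v10.
  have v20 : v.2 = 0 := b0.
  by move/eqP: v0; apply; rewrite [v]surjective_pairing v10 v20.
have [b_lt0|b_gt0|b0] := ltgtP b 0.
- have [|] := ltP A b; first by exists (inord 3); rewrite inordK //=; lra.
  have [|] := ltP (A + b) 0; first by exists (inord 4); rewrite inordK //=; lra.
  by exists (inord 5); rewrite inordK //=; lra.
- have [|] := ltP b A; first by exists (inord 0); rewrite inordK //=; lra.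
  have [|] := ltP 0 (A + b); first by exists (inord 1); rewrite inordK //=; lra.
  by exists (inord 2); rewrite inordK //=; lra.
- have := Ab0 b0; rewrite neq_lt => /orP[A_lt0|A_gt0].
    by exists (inord 3); rewrite inordK //=; lra.
  by exists (inord 0); rewrite inordK //=; lra.
Qed.

Lemma same_sector_dot_gt s (k : 'I_6) (a b : pt R) r2 : s ^+ 2 = 3 -> 0 < s ->
  in_sector s k a -> in_sector s k b ->
  a.1 ^+ 2 + a.2 ^+ 2 = r2 -> b.1 ^+ 2 + b.2 ^+ 2 = r2 -> 0 < r2 ->
  r2 < 2 * (a.1 * b.1 + a.2 * b.2).
Proof.
move=> s3 s0; case: a b => [a1 a2] [b1 b2] /=.
case: k => [[|[|[|[|[|[|//]]]]]] _] /= /andP[? ?] /andP[? ?] ha hb r0.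
- by apply: (@cone60_dot_gt s 1 0) => //; try apply/andP; try split; nra.
- by apply: (@cone60_dot_gt s (1/2) (s/2)) => //; try apply/andP; try split; nra.
- by apply: (@cone60_dot_gt s (-1/2) (s/2)) => //; try apply/andP; try split; nra.
- by apply: (@cone60_dot_gt s (-1) 0) => //; try apply/andP; try split; nra.
- by apply: (@cone60_dot_gt s (-1/2) (-s/2)) => //; try apply/andP; try split; nra.
- by apply: (@cone60_dot_gt s (1/2) (-s/2)) => //; try apply/andP; try split; nra.
Qed.

Lemma card_circle_separated_le6 (I : finType) (A : {set I}) (p : I -> pt R)
    (c : pt R) (r2 : R) : 0 < r2 ->
  {in A, forall j, sqdist c (p j) = r2} ->
  {in A &, forall j k, j != k -> r2 <= sqdist (p j) (p k)} ->
  (#|A| <= 6)%N.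
Proof.
move=> r0 onC sep.
pose s := Num.sqrt (3 : R).
have s0 : 0 < s by rewrite sqrtr_gt0.
have s3 : s ^+ 2 = 3 by rewrite sqr_sqrtr.
pose v j := ((p j).1 - c.1, (p j).2 - c.2).
have normv j : j \in A -> (v j).1 ^+ 2 + (v j).2 ^+ 2 = r2.
  by move=> /onC <-; rewrite /sqdist /=; ring.
have v_neq0 j : j \in A -> v j != (0, 0).
  by move=> /normv; apply: contraPneq => ->; rewrite /= expr0n /= addr0; lra.
pose sector j := odflt ord0 [pick k : 'I_6 | in_sector s k (v j)].
have sectorP j : j \in A -> in_sector s (sector j) (v j).
  move=> jA; rewrite /sector; case: pickP => [k //|none].
  by have [k] := exists_sector s0 (v_neq0 j jA); rewrite none.
have sector_inj : {in A &, injective sector}.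
  move=> j k jA kA same; apply/eqP; apply: contraT => /(sep j k jA kA).
  rewrite leNgt => /negbTE <-.
  have := same_sector_dot_gt s3 s0 (sectorP j jA) _ (normv j jA) (normv k kA) r0.
  rewrite same => /(_ (sectorP k kA)).
  have -> : sqdist (p j) (p k) = ((v j).1 ^+ 2 + (v j).2 ^+ 2) + ((v k).1 ^+ 2 + (v k).2 ^+ 2)
                                 - 2 * ((v j).1 * (v k).1 + (v j).2 * (v k).2).
    by rewrite /sqdist /=; ring.
  rewrite normv // normv //; lra.
rewrite -(card_in_imset sector_inj); apply: leq_trans (max_card _) _.
by rewrite card_ord.
Qed.

End KissingNumber.

Section BoxCover.
Variable R : realType.
Local Notation mu := (@lebesgue_measure R).

Definition volR d (a b : 'I_d -> R) : R := \prod_(i < d) (b i - a i).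
Definition in_boxR d (a b z : 'I_d -> R) := forall i, a i <= z i <= b i.

Lemma volR_ge0 d (a b : 'I_d -> R) : (forall i, a i <= b i) -> 0 <= volR a b.
Proof. by move=> ab; apply: prodr_ge0 => i _; rewrite subr_ge0. Qed.

Lemma volR_recl d (a b : 'I_d.+1 -> R) :
  volR a b = (b ord0 - a ord0) * volR (fun j => a (lift ord0 j)) (fun j => b (lift ord0 j)).
Proof. by rewrite /volR big_ord_recl. Qed.

Lemma lebesgue_measure_itv_cc (x y : R) : x <= y -> mu `[x, y] = (y - x)%:E.
Proof.
move=> xy; rewrite lebesgue_measure_itv /= lte_fin.
by case: ltgtP xy => // -> _; rewrite subrr.
Qed.

Lemma integral_scaled_indic_le (D : set R) (k x y : R) : measurable D ->
  0 <= k -> x <= y ->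
  (\int[mu]_(t in D) (k * \1_`[x, y] t)%:E <= (k * (y - x))%:E)%E.
Proof.
move=> mD k0 xy.
have mI : measurable `[x, y] by exact: measurable_itv.
have indic_ge0 t : D t -> (0 <= (\1_`[x, y] t : R)%:E)%E.
  by move=> _; rewrite lee_fin indicE.
have m_indic : measurable_fun D (fun t => (\1_`[x, y] t : R)%:E).
  by apply/measurable_EFinP; apply: measurable_indic.
under eq_integral do rewrite EFinM.
rewrite ge0_integralZl_EFin // integral_indic // EFinM lee_pmul ?lee_fin //.
by rewrite -lebesgue_measure_itv_cc // le_measure ?inE //; exact: measurableI.
Qed.

(* Proved by induction on [d]: integrate over the first coordinate [t] the
   inequality for the slice of the box at [t], which is covered by the
   boxes whose first interval contains [t]. *)
Lemma volR_le_cover d (a b : nat -> 'I_d -> R) (c : nat -> bool) (al be : 'I_d -> R) :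
  (forall n i, a n i <= b n i) -> (forall i, al i <= be i) ->
  (forall z, in_boxR al be z -> exists n, c n /\ in_boxR (a n) (b n) z) ->
  ((volR al be)%:E <= \sum_(n <oo) ((c n)%:R * volR (a n) (b n))%:E)%E.
Proof.
elim: d a b c al be => [|d IH] a b c al be ab albe cover.
  have [|n [cn _]] := cover al; first by case.
  apply: le_trans (nneseries_lim_ge n.+1 _); last first.
    by move=> k _ _; rewrite lee_fin mulr_ge0 // volR_ge0.
  rewrite big_nat_recr //= cn /volR !big_ord0 mul1r leeDr //.
  by rewrite sume_ge0 // => k _; rewrite lee_fin mulr_ge0 // volR_ge0.
pose tl (v : 'I_d.+1 -> R) (j : 'I_d) := v (lift ord0 j).
pose D : set R := [set` `[al ord0, be ord0]].
have mD : measurable D by exact: measurable_itv.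
pose k n := (c n)%:R * volR (tl (a n)) (tl (b n)).
pose I n : set R := [set` `[a n ord0, b n ord0]].
pose h n t := (k n * \1_(I n) t)%:E.
have k_ge0 n : 0 <= k n by rewrite mulr_ge0 // volR_ge0 // => i; exact: ab.
have h_ge0 n t : (0 <= h n t)%E by rewrite lee_fin mulr_ge0 // indicE.
have mh n : measurable_fun D (h n).
  apply/measurable_EFinP; apply: measurable_funM; first exact: measurable_cst.
  by apply: measurable_indic; exact: measurable_itv.
have slice t : D t -> ((volR (tl al) (tl be))%:E <= \sum_(n <oo) h n t)%E.
  move=> Dt; apply: le_trans (IH (fun n => tl (a n)) (fun n => tl (b n))
                                  (fun n => c n && (t \in I n)) (tl al) (tl be) _ _ _) _.
  - by move=> n i; exact: ab.
  - by move=> i; exact: albe.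
  - move=> w w_in.
    pose z i := if unlift ord0 i is Some j then w j else t.
    have [|n [cn z_in]] := cover z.
      move=> i; rewrite /z; case: (unliftP ord0 i) => [j ->|->]; first exact: w_in.
      by move: Dt; rewrite /D /= in_itv.
    exists n; split.
      rewrite cn; apply/mem_set; rewrite /I /= in_itv /=.
      by have := z_in ord0; rewrite /z unlift_none.
    by move=> j; have := z_in (lift ord0 j); rewrite /z liftK.
  - rewrite le_eqVlt; apply/orP; left; apply/eqP/eq_eseriesr => n _.
    rewrite /h /k indicE.
    by case: (c n); case: (t \in I n); rewrite /= ?mul1r ?mul0r ?mulr1 ?mulr0.
rewrite volR_recl.
have -> : (((be ord0 - al ord0) * volR (tl al) (tl be))%:E =
           \int[mu]_(t in D) (cst (volR (tl al) (tl be))%:E) t)%E.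
  rewrite integral_cst // [X in (_ * X)%E](_ : _ = (be ord0 - al ord0)%:E).
    by rewrite -EFinM mulrC.
  exact: lebesgue_measure_itv_cc.
apply: (@le_trans _ _ (\int[mu]_(t in D) (\sum_(n <oo) h n t))%E).
  apply: ge0_le_integral => //.
  - by move=> t _; rewrite lee_fin volR_ge0 // => i; exact: albe.
  - exact: ge0_emeasurable_sum (fun n t _ _ => h_ge0 n t) (fun n _ => mh n).
rewrite integral_nneseries //; apply: lee_nneseries => [n _ _|n _].
  exact: integral_ge0.
have -> : (c n)%:R * volR (a n) (b n) = k n * (b n ord0 - a n ord0).
  by rewrite volR_recl mulrCA mulrC.
exact: integral_scaled_indic_le.
Qed.

End BoxCover.

Section NullSets.
Variables (R : realType) (N : nat).

(* (R^2)^N is identified with R^(N + N): first coordinates, then second ones. *)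
Definition config_vec (v : config R N) : 'I_(N + N) -> R :=
  fun k => match fintype.split k with inl i => (v i).1 | inr i => (v i).2 end.

Lemma config_vecl v i : config_vec v (lshift N i) = (v i).1.
Proof. by rewrite /config_vec -[lshift N i]/(unsplit (inl _ i)) unsplitK. Qed.

Lemma config_vecr v i : config_vec v (rshift N i) = (v i).2.
Proof. by rewrite /config_vec -[rshift N i]/(unsplit (inr _ i)) unsplitK. Qed.

Lemma split_ind (P : 'I_(N + N) -> Prop) :
  (forall i, P (lshift N i)) -> (forall i, P (rshift N i)) -> forall k, P k.
Proof.
by move=> Pl Pr k; rewrite -(splitK k); case: fintype.split => i; [exact: Pl | exact: Pr].
Qed.

Lemma volR_config_vec (a b : config R N) :
  volR (config_vec a) (config_vec b) = box_vol a b.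
Proof.
rewrite /volR /box_vol big_split_ord big_split /=.
by congr (_ * _); apply: eq_bigr => i _; rewrite ?config_vecl ?config_vecr.
Qed.

Lemma in_boxR_config_vec (a b z : config R N) :
  in_boxR (config_vec a) (config_vec b) (config_vec z) <-> in_box a b z.
Proof.
split=> [inz i|inz]; first by rewrite -?config_vecl -?config_vecr; split; apply: inz.
by apply: split_ind => i; rewrite ?config_vecl ?config_vecr; case: (inz i).
Qed.

Lemma box_vol_le_cover (lo hi : config R N) (a b : nat -> config R N) :
  (forall n i, (a n i).1 <= (b n i).1 /\ (a n i).2 <= (b n i).2) ->
  (forall i, (lo i).1 <= (hi i).1 /\ (lo i).2 <= (hi i).2) ->
  (forall z, in_box lo hi z -> exists n, in_box (a n) (b n) z) ->
  ((box_vol lo hi)%:E <= \sum_(n <oo) (box_vol (a n) (b n))%:E)%E.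
Proof.
move=> ab lohi cover; rewrite -volR_config_vec.
under eq_eseriesr do rewrite -volR_config_vec -[X in X%:E]mul1r.
apply: (volR_le_cover (c := fun=> true)).
- by move=> n; apply: split_ind => i; rewrite ?config_vecl ?config_vecr; case: (ab n i).
- by apply: split_ind => i; rewrite ?config_vecl ?config_vecr; case: (lohi i).
- move=> w w_in; pose z i := (w (lshift N i), w (rshift N i)).
  have -> : w = config_vec z.
    by apply: funext; apply: split_ind => i; rewrite ?config_vecl ?config_vecr.
  have z_in : in_box lo hi z.
    move=> i; have := w_in (lshift N i); have := w_in (rshift N i).
    by rewrite !config_vecl !config_vecr /z /=; do 2![move=> ->].
  by have [n ?] := cover z z_in; exists n; split=> //; apply/in_boxR_config_vec.
Qed.

Lemma exists_notin_null_in_box (L : config R N -> Prop) (lo hi : config R N) :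
  (forall i, (lo i).1 < (hi i).1 /\ (lo i).2 < (hi i).2) -> null_set L ->
  exists z, in_box lo hi z /\ ~ L z.
Proof.
move=> lohi nullL; apply: contrapT => /forallNP all_in_L.
have vol_gt0 : 0 < box_vol lo hi.
  by apply: prodr_gt0 => i _; case: (lohi i) => ? ?; apply: mulr_gt0; rewrite subr_gt0.
have [a [b [ab [cover small]]]] := nullL _ (divr_gt0 vol_gt0 (ltr0n _ 2)).
have cover_box z : in_box lo hi z -> exists n, in_box (a n) (b n) z.
  by move=> z_in; apply: cover; apply: contrapT => notL; apply: (all_in_L z).
have sum_le : (\sum_(n <oo) (box_vol (a n) (b n))%:E <= (box_vol lo hi / 2)%:E)%E.
  apply: lime_le.
    apply: is_cvg_nneseries => n _ _; rewrite lee_fin prodr_ge0 // => i _.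
    by case: (ab n i) => ? ?; rewrite mulr_ge0 // subr_ge0.
  by apply: nearW => M; rewrite sumEFin lee_fin big_mkord ltW.
have := box_vol_le_cover ab (fun i => conj (ltW (lohi i).1) (ltW (lohi i).2)) cover_box.
by move=> /le_trans/(_ sum_le); rewrite lee_fin; lra.
Qed.

End NullSets.

Section NearZero.
Variable R : realType.

Lemma near0_lt_mulX (c K : R) n : 0 < K -> \forall t \near 0^'+, c * t ^+ n.+1 < K.
Proof.
move=> K0; near=> t.
have t0 : 0 < t by near: t; exact: nbhs_right_gt.
have t1 : t <= 1 by near: t; exact: nbhs_right_le.
have tK : t * (`|c| + 1) < K.
  rewrite -ltr_pdivlMr ?ltr_wpDl //; near: t.
  by apply: nbhs_right_lt; rewrite divr_gt0 // ltr_wpDl.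
have tn : t ^+ n.+1 <= t by rewrite exprS ler_piMr // ?exprn_ile1 // ltW.
apply: le_lt_trans (ler_norm _) _; rewrite normrM normrX (gtr0_norm t0).
have : `|c| * t ^+ n.+1 <= `|c| * t by rewrite ler_wpM2l.
nra.
Unshelve. all: by end_near. Qed.

Lemma near0_quadratic_neq0 (A B C : R) : C != 0 ->
  \forall s \near 0^'+, A + B * s + C * s ^+ 2 != 0.
Proof.
move=> C0; have [-> {A}|A0] := eqVneq A 0.
  have [-> {B}|B0] := eqVneq B 0.
    near=> s; have s0 : 0 < s by near: s; exact: nbhs_right_gt.
    by rewrite add0r mul0r add0r mulf_eq0 negb_or C0 expf_eq0 /= gt_eqF.
  near=> s.
  have s0 : 0 < s by near: s; exact: nbhs_right_gt.
  have Cs : `|C| * s ^+ 1 < `|B| by near: s; apply: near0_lt_mulX; rewrite normr_gt0.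
  rewrite add0r (_ : B * s + C * s ^+ 2 = s * (B + C * s)); last by ring.
  rewrite mulf_eq0 negb_or gt_eqF //=.
  apply: contraTneq Cs => /eqP; rewrite addr_eq0 => /eqP ->.
  by rewrite normrN normrM (gtr0_norm s0) expr1 ltxx.
near=> s.
have s0 : 0 < s by near: s; exact: nbhs_right_gt.
have Bs : `|B| * s ^+ 1 < `|A| / 2.
  by near: s; apply: near0_lt_mulX; rewrite divr_gt0 ?normr_gt0.
have Cs : `|C| * s ^+ 2 < `|A| / 2.
  by near: s; apply: near0_lt_mulX; rewrite divr_gt0 ?normr_gt0.
have : `|B * s + C * s ^+ 2| < `|A|.
  apply: le_lt_trans (ler_normD _ _) _.
  by rewrite (normrM C) (normrM B) normrX (gtr0_norm s0) -[s in `|B| * s]expr1; lra.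
apply: contraTneq; rewrite -addrA => /eqP; rewrite addr_eq0 => /eqP ->.
by rewrite normrN ltxx.
Unshelve. all: by end_near. Qed.

Lemma near0_ex (P : R -> Prop) : (\forall t \near 0^'+, P t) -> exists t, 0 < t /\ P t.
Proof.
move=> nP; apply: (filter_ex (FF := at_right_proper_filter 0)).
by apply: filterS2 (nbhs_right_gt 0) nP.
Qed.

Lemma near0_ex2 (P Q : R -> Prop) : (\forall t \near 0^'+, P t) ->
  (\forall t \near 0^'+, Q t) -> exists t, 0 < t /\ P t /\ Q t.
Proof. by move=> nP nQ; apply: near0_ex; apply: filterS2 nP nQ. Qed.

End NearZero.

Section Closeness.
Variable R : realType.

Definition close_pt (h : R) (p q : pt R) := `|q.1 - p.1| <= h /\ `|q.2 - p.2| <= h.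
Definition close_cfg N (h : R) (x z : config R N) := forall i, close_pt h (x i) (z i).

Lemma close_cfg_trans N (h h' : R) (x y z : config R N) :
  close_cfg h x y -> close_cfg h' y z -> close_cfg (h + h') x z.
Proof.
move=> xy yz i; case: (xy i) (yz i) => [xy1 xy2] [yz1 yz2].
by split; [rewrite -(subrKA (y i).1) | rewrite -(subrKA (y i).2)];
  apply: le_trans (ler_normD _ _) _; rewrite addrC lerD.
Qed.

Lemma close_cfg_le N (h h' : R) (x z : config R N) :
  h <= h' -> close_cfg h x z -> close_cfg h' x z.
Proof. by move=> hh' xz i; case: (xz i) => ? ?; split; apply: le_trans hh'. Qed.

Lemma ler_sqr_perturb (u e h : R) : `|e| <= 2 * h ->
  `|(u + e) ^+ 2 - u ^+ 2| <= 4 * `|u| * h + 4 * h ^+ 2.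
Proof.
move=> eh; have h0 : 0 <= h by have := normr_ge0 e; lra.
rewrite (_ : _ - _ = e * (2 * u + e)); last by ring.
rewrite normrM; apply: le_trans (ler_pM (normr_ge0 _) (normr_ge0 _) eh (ler_normD _ _)) _.
rewrite normrM ger0_norm //.
have := ler_wpM2l h0 eh; nra.
Qed.

Lemma near0_close_pt_sqdist (p q : pt R) (eta : R) : 0 < eta ->
  \forall h \near 0^'+, forall p' q', close_pt h p p' -> close_pt h q q' ->
    `|sqdist p' q' - sqdist p q| < eta.
Proof.
move=> eta0; near=> h => p' q' [p1 p2] [q1 q2].
have lin : (4 * (`|p.1 - q.1| + `|p.2 - q.2|)) * h ^+ 1 < eta / 2.
  by near: h; apply: near0_lt_mulX; rewrite divr_gt0.
have quad : 8 * h ^+ 2 < eta / 2 by near: h; apply: near0_lt_mulX; rewrite divr_gt0.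
have coord (a b a' b' : R) : `|a' - a| <= h -> `|b' - b| <= h ->
    `|(a' - b') ^+ 2 - (a - b) ^+ 2| <= 4 * `|a - b| * h + 4 * h ^+ 2.
  move=> ah bh; rewrite (_ : a' - b' = (a - b) + ((a' - a) - (b' - b))); last by ring.
  apply: ler_sqr_perturb; apply: le_trans (ler_normB _ _) _; lra.
rewrite /sqdist (_ : _ - _ = ((p'.1 - q'.1) ^+ 2 - (p.1 - q.1) ^+ 2)
                           + ((p'.2 - q'.2) ^+ 2 - (p.2 - q.2) ^+ 2)); last by ring.
apply: le_lt_trans (ler_normD _ _) _.
have := coord _ _ _ _ p1 q1; have := coord _ _ _ _ p2 q2; rewrite expr1 in lin; lra.
Unshelve. all: by end_near. Qed.

Lemma near0_close_cfg_sqdist N (x : config R N) (eta : R) : 0 < eta ->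
  \forall h \near 0^'+, forall z, close_cfg h x z ->
    forall i k, `|sqdist (z i) (z k) - sqdist (x i) (x k)| < eta.
Proof.
move=> eta0; apply: filterS (filter_forall _ (fun ik : 'I_N * 'I_N =>
  near0_close_pt_sqdist (x ik.1) (x ik.2) eta0)) => h near_ik z xz i k.
exact: (near_ik (i, k)).
Qed.

Lemma sqdist_close_pt (h : R) p q : close_pt h p q -> sqdist q p <= 2 * h ^+ 2.
Proof.
have sqr_le (a : R) : `|a| <= h -> a ^+ 2 <= h ^+ 2.
  by rewrite ler_norml => /andP[? ?]; nra.
by case=> /sqr_le ? /sqr_le ?; rewrite /sqdist; lra.
Qed.

Lemma cdist_lt N (x y : config R N) (b eps : R) : 0 < eps ->
  (forall i, sqdist (x i) (y i) <= b) -> N%:R * b < eps ^+ 2 -> cdist x y < eps.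
Proof.
move=> eps0 xy Nb; rewrite /cdist -(ger0_norm (ltW eps0)) -sqrtr_sqr ltr_sqrt ?exprn_gt0 //.
apply: le_lt_trans Nb; apply: le_trans (ler_sum _ (fun i _ => xy i)) _.
by rewrite sumr_const card_ord mulr_natl.
Qed.

Lemma near0_close_cfg_cball N (x : config R N) (delta : R) : 0 < delta ->
  \forall h \near 0^'+, forall z, close_cfg h x z -> cball x delta z.
Proof.
move=> delta0; near=> h => z xz.
apply: (cdist_lt (b := 2 * h ^+ 2)) => // [i|]; first exact: sqdist_close_pt.
by rewrite mulrA; near: h; apply: near0_lt_mulX; rewrite exprn_gt0.
Unshelve. all: by end_near. Qed.

End Closeness.

Section Genericity.
Variables (R : realType) (N : nat).
Implicit Types (x z : config R N).

Lemma not_switchingE z : ~ switching z <->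
  forall i j k, j != k -> j != i -> k != i -> sqdist (z i) (z j) != sqdist (z i) (z k).
Proof.
split=> [ns i j k jk ji ki|ne [i [j [k [/eqP jk [/eqP ji [/eqP ki /eq_pdist]]]]]]].
  by apply/eqP => /eq_pdist e; apply: ns; exists i, j, k; do !split=> //; apply/eqP.
by apply/eqP; exact: ne.
Qed.

Lemma expn2_addn_neq (i j k : nat) : j != k -> j != i -> k != i ->
  (2 ^ j + 2 ^ k != 2 ^ i.+1)%N.
Proof.
move=> jk ji ki; wlog lt_jk : j k jk ji ki / (j < k)%N => [hyp|].
  move: (jk); rewrite neq_ltn => /orP[lt|lt]; first exact: hyp.
  by rewrite addnC; apply: hyp; rewrite // eq_sym.
rewrite expnS.
have pos m : (0 < 2 ^ m)%N by rewrite expn_gt0.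
have [ik|ki'] := ltnP i k.
  by have := leq_pexp2l (isT : (0 < 2)%N) ik; rewrite expnS; have := pos j; lia.
have [ij|ji'] := ltnP i j; first by move: lt_jk; lia.
have ltj : (2 ^ j < 2 ^ i)%N by rewrite ltn_exp2l // ltn_neqAle ji.
have ltk : (2 ^ k < 2 ^ i)%N by rewrite ltn_exp2l // ltn_neqAle ki.
lia.
Qed.

Lemma sqr_gap_pow2 (i j k : nat) : j != k -> j != i -> k != i ->
  ((2 ^ i)%:R - (2 ^ j)%:R) ^+ 2 - ((2 ^ i)%:R - (2 ^ k)%:R) ^+ 2 != 0 :> R.
Proof.
move=> jk ji ki; rewrite subr_eq0 eqf_sqr negb_or; apply/andP; split.
  by rewrite (inj_eq (addrI _)) (inj_eq oppr_inj) eqr_nat eqn_exp2l.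
apply: contraNneq (expn2_addn_neq jk ji ki) => e.
by rewrite -(eqr_nat R) natrD expnS natrM; apply/eqP; lra.
Qed.

(* The weights [2 ^ i] make the [s ^ 2] coefficient of every tie defect nonzero,
   see [sqr_gap_pow2]. *)
Definition perturb (s : R) x : config R N := fun i => ((x i).1 + s * (2 ^ i)%:R, (x i).2).

Lemma near0_perturb_not_switching x : \forall s \near 0^'+, ~ switching (perturb s x).
Proof.
pose tie s (t : 'I_N * 'I_N * 'I_N) := let: (i, j, k) := t in
  j != k -> j != i -> k != i ->
  sqdist (perturb s x i) (perturb s x j) != sqdist (perturb s x i) (perturb s x k).
have tri t : \forall s \near 0^'+, tie s t.
  case: t => [[i j] k]; rewrite /tie.
  have [/and3P[jk ji ki]|] := boolP [&& j != k, j != i & k != i]; last first.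
    by move=> nd; apply: nearW => s jk ji ki; rewrite jk ji ki in nd.
  pose c (m : 'I_N) : R := (2 ^ m)%:R.
  have := near0_quadratic_neq0 (sqdist (x i) (x j) - sqdist (x i) (x k))
    (2 * ((x i).1 - (x j).1) * (c i - c j) - 2 * ((x i).1 - (x k).1) * (c i - c k))
    (sqr_gap_pow2 jk ji ki).
  apply: filterS => s Q0 _ _ _; rewrite -subr_eq0; apply: contra_neq Q0 => e.
  by rewrite -e /sqdist /=; ring.
apply: filterS (filter_forall _ tri) => s ties; apply/not_switchingE => i j k.
exact: (ties (i, j, k)).
Qed.

Lemma near0_close_perturb x (h : R) : 0 < h -> \forall s \near 0^'+, close_cfg h x (perturb s x).
Proof.
move=> h0; near=> s.
have s0 : 0 < s by near: s; exact: nbhs_right_gt.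
have small : (2 ^ N)%:R * s ^+ 1 < h by near: s; exact: near0_lt_mulX.
move=> i; split; rewrite /perturb /=; last by rewrite subrr normr0 ltW.
rewrite (_ : _ - _ = s * (2 ^ i)%:R); last by ring.
rewrite ger0_norm; last by rewrite mulr_ge0 // ltW.
rewrite mulrC; apply: le_trans (ltW small); rewrite expr1 ler_pM2r //.
by rewrite ler_nat leq_pexp2l // ltnW.
Unshelve. all: by end_near. Qed.

Lemma near0_close_not_switching z0 : ~ switching z0 ->
  \forall r \near 0^'+, forall z, close_cfg r z0 z -> ~ switching z.
Proof.
move=> /not_switchingE ns0.
pose tie r (t : 'I_N * 'I_N * 'I_N) := let: (i, j, k) := t in
  forall z, close_cfg r z0 z -> j != k -> j != i -> k != i ->
  sqdist (z i) (z j) != sqdist (z i) (z k).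
have tri t : \forall r \near 0^'+, tie r t.
  case: t => [[i j] k]; rewrite /tie.
  have [/and3P[jk ji ki]|] := boolP [&& j != k, j != i & k != i]; last first.
    by move=> nd; apply: nearW => r z _ jk ji ki; rewrite jk ji ki in nd.
  set gap := `|sqdist (z0 i) (z0 j) - sqdist (z0 i) (z0 k)|.
  have gap0 : 0 < gap / 2 by rewrite divr_gt0 // normr_gt0 subr_eq0 ns0.
  apply: filterS (near0_close_cfg_sqdist z0 gap0) => r near_r z z0z _ _ _.
  have := near_r z z0z i j; have := near_r z z0z i k.
  move=> near_k near_j; apply/eqP => e; suff : gap < gap by rewrite ltxx.
  rewrite {1}/gap (_ : _ - _ = (sqdist (z0 i) (z0 j) - sqdist (z i) (z j))
                             + (sqdist (z i) (z k) - sqdist (z0 i) (z0 k))); last first.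
    by rewrite e; ring.
  by apply: le_lt_trans (ler_normD _ _) _; rewrite distrC; lra.
apply: filterS (filter_forall _ tri) => r ties z z0z; apply/not_switchingE => i j k.
exact: (ties (i, j, k)).
Qed.

Lemma exists_close_regular (x : config R N) (h : R) (L : config R N -> Prop) :
  0 < h -> null_set L -> exists z, close_cfg h x z /\ ~ L z /\ ~ switching z.
Proof.
move=> h0 nullL.
have h2 : 0 < h / 2 by rewrite divr_gt0.
have [s [_ [x_z0 ns_z0]]] :=
  near0_ex2 (near0_close_perturb x h2) (near0_perturb_not_switching x).
set z0 := perturb s x in x_z0 ns_z0; clearbody z0.
have [r [r0 [rh ns_r]]] := near0_ex2 (nbhs_right_le h2) (near0_close_not_switching ns_z0).
pose lo : config R N := fun i => ((z0 i).1 - r, (z0 i).2 - r).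
pose hi : config R N := fun i => ((z0 i).1 + r, (z0 i).2 + r).
have [|z [z_in notLz]] := @exists_notin_null_in_box _ _ L lo hi _ nullL.
  by move=> i; rewrite /lo /hi /=; split; lra.
have z0_z : close_cfg r z0 z.
  move=> i; case: (z_in i) => /andP[l1 u1] /andP[l2 u2].
  rewrite /lo /hi /= in l1 u1 l2 u2.
  by split; rewrite ler_distl; apply/andP; split; lra.
exists z; split; last by split=> //; exact: ns_r.
by apply: close_cfg_le (close_cfg_trans x_z0 z0_z); lra.
Qed.

End Genericity.

Section NearestNeighbours.
Variables (R : realType) (N : nat).
Implicit Types (z : config R N) (i j k : 'I_N).

Lemma exists_nbr z i : (2 <= N)%N -> exists k, k \in nbrs z i.
Proof.
move=> N2; have [k0 k0i] : exists k0 : 'I_N, k0 != i.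
  have [->|i0] := eqVneq i (Ordinal (ltnW N2)).
    by exists (Ordinal N2); apply/eqP => -[].
  by exists (Ordinal (ltnW N2)); rewrite eq_sym.
case: (arg_minP (fun k => pdist (z i) (z k)) (P := fun k => k != i) k0i) => k ki kmin.
by exists k; rewrite inE ki; apply/forallP => k'; apply/implyP; exact: kmin.
Qed.

Lemma nbrs_sqdist_le z i j k : j \in nbrs z i -> k != i ->
  sqdist (z i) (z j) <= sqdist (z i) (z k).
Proof. by rewrite inE => /andP[_ /forallP/(_ k)/implyP le] /le; rewrite ler_pdist. Qed.

Lemma nbrs_neq z i j : j \in nbrs z i -> j != i.
Proof. by rewrite inE => /andP[]. Qed.

Lemma sqdist_ge_nbrs z i k (r2 : R) : (2 <= N)%N ->
  {in nbrs z i, forall j, sqdist (z i) (z j) = r2} -> k != i -> r2 <= sqdist (z i) (z k).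
Proof.
by move=> N2 onC ki; have [j jn] := exists_nbr z i N2; rewrite -(onC j jn) nbrs_sqdist_le.
Qed.

Definition closest z i := odflt i [pick j in nbrs z i].

Lemma closest_nbrs z i : (2 <= N)%N -> closest z i \in nbrs z i.
Proof.
rewrite /closest => N2; case: pickP => [j //|none].
by have [k] := exists_nbr z i N2; rewrite none.
Qed.

Lemma fvec_sqnorm (xi : R) z i : sqdist (z i) (z (closest z i)) != 0 ->
  sqdist (0, 0) (fvec xi z i) =
  (sqdist (z i) (z (closest z i)) - xi ^+ 2) ^+ 2 / sqdist (z i) (z (closest z i)).
Proof.
rewrite /fvec -/(closest z i); set c := closest z i; set d := sqdist _ _ => d0.
have vd : ((z c).1 - (z i).1) ^+ 2 + ((z c).2 - (z i).2) ^+ 2 = d by rewrite /d /sqdist; ring.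
rewrite vd /sqdist /=.
transitivity ((((z c).1 - (z i).1) ^+ 2 + ((z c).2 - (z i).2) ^+ 2) * (1 - xi ^+ 2 / d) ^+ 2).
  by ring.
by rewrite vd; field.
Qed.

End NearestNeighbours.

Section VectorField.
Variables (R : realType) (N : nat) (xi : R).
Hypotheses (N2 : (2 <= N)%N) (xi_gt0 : 0 < xi).

Lemma near0_fvec_small (x : config R N) (eps : R) : 0 < eps ->
  (forall i, {in nbrs x i, forall k, sqdist (x i) (x k) = xi ^+ 2}) ->
  \forall eta \near 0^'+, forall z : config R N,
    (forall i k, `|sqdist (z i) (z k) - sqdist (x i) (x k)| < eta) ->
    ~ degenerate z /\ cdist (@config0 R N) (fvec xi z) < eps.
Proof.
move=> eps0 onC; have xi2 : 0 < xi ^+ 2 by rewrite exprn_gt0.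
near=> eta => z zx.
have eta0 : 0 < eta by near: eta; exact: nbhs_right_gt.
have eta_le : eta <= xi ^+ 2 / 2 by near: eta; apply: nbhs_right_le; rewrite divr_gt0.
have eta_small : (N%:R * (2 / xi ^+ 2)) * eta ^+ 2 < eps ^+ 2.
  by near: eta; apply: near0_lt_mulX; rewrite exprn_gt0.
have sep i k : k != i -> xi ^+ 2 - eta < sqdist (z i) (z k).
  move=> ki; have := zx i k; rewrite ltr_distl => /andP[+ _].
  by apply: le_lt_trans; rewrite lerD2r sqdist_ge_nbrs.
split.
  move=> [i [k [ik zik]]]; have ki : k != i by apply/eqP => /esym.
  by have := sep i k ki; rewrite zik /sqdist !subrr expr0n /= addr0; lra.
apply: (cdist_lt (b := 2 / xi ^+ 2 * eta ^+ 2)) => // [i|]; last by rewrite mulrA.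
have cn := closest_nbrs z i N2; set c := closest z i in cn *.
have [k0 k0n] := exists_nbr x i N2.
have d_lo := sep i c (nbrs_neq cn).
have d_up : sqdist (z i) (z c) < xi ^+ 2 + eta.
  apply: le_lt_trans (nbrs_sqdist_le cn (nbrs_neq k0n)) _.
  by have := zx i k0; rewrite ltr_distl (onC i k0 k0n) => /andP[_].
rewrite fvec_sqnorm; last by rewrite gt_eqF //; lra.
rewrite ler_pdivrMr; last lra.
have dev : (sqdist (z i) (z c) - xi ^+ 2) ^+ 2 <= eta ^+ 2.
  rewrite -real_normK ?num_real // lerXn2r ?nnegrE ?normr_ge0 ?ltW //.
  by rewrite ltr_distl; apply/andP; split; lra.
have scale : 2 / xi ^+ 2 * eta ^+ 2 * (xi ^+ 2 / 2) = eta ^+ 2.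
  by field; rewrite gt_eqF.
apply: le_trans dev _; rewrite -{1}scale ler_wpM2l //; last lra.
by rewrite mulr_ge0 ?divr_ge0 ?exprn_ge0 // ltW.
Unshelve. all: by end_near. Qed.

End VectorField.

Lemma filippov_K_of_approx (R : realType) N (xi : R) (y v : config R N) :
  (forall delta eps, 0 < delta -> 0 < eps -> forall L, null_set L ->
     exists z, [/\ cball y delta z, ~ L z, ~ switching z, ~ degenerate z
                 & cdist v (fvec xi z) < eps]) ->
  filippov_K xi y v.
Proof.
move=> approx delta delta0 L nullL eps eps0.
have [z [yz nLz nsz ndz vz]] := approx _ _ delta0 eps0 L nullL.
exists 1%N, (fun=> 1), (fun=> fvec xi z); do !split=> //; first by rewrite big_ord1.
  by move=> _; exists z.
suff -> : conv_comb (fun _ : 'I_1 => 1) (fun=> fvec xi z) = fvec xi z by [].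
by apply: boolp.funext => i; rewrite /conv_comb !big_ord1 !mul1r -surjective_pairing.
Qed.

Theorem mainTheorem2 (R : realType) (N : nat) (xi : R) (x : config R N) :
  (2 <= N)%N -> 0 < xi -> ~ degenerate x ->
  (forall i k : 'I_N, k \in nbrs x i -> pdist (x i) (x k) = xi) ->
  filippov_equilibrium xi x /\
  (forall i : 'I_N, (1 <= #|nbrs x i| <= 6)%N).
Proof.
move=> N2 xi0 _ onC.
have onC2 i : {in nbrs x i, forall k, sqdist (x i) (x k) = xi ^+ 2}.
  by move=> k kn; apply: pdist_sqdist (ltW xi0) (onC i k kn).
split.
  apply: filippov_K_of_approx => delta eps delta0 eps0 L nullL.
  have [eta [eta0 f_small]] := near0_ex (near0_fvec_small N2 xi0 eps0 onC2).
  have [h [h0 [h_ball h_sqdist]]] :=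
    near0_ex2 (near0_close_cfg_cball x delta0) (near0_close_cfg_sqdist x eta0).
  have [z [xz [nLz nsz]]] := exists_close_regular x h0 nullL.
  have [ndz fz] := f_small z (h_sqdist z xz).
  by exists z; split=> //; exact: h_ball.
move=> i; apply/andP; split.
  by have [k kn] := exists_nbr x i N2; apply/card_gt0P; exists k.
apply: (card_circle_separated_le6 (exprn_gt0 2 xi0) (onC2 i)) => j k jn kn jk.
by apply: sqdist_ge_nbrs (onC2 j) _; rewrite // eq_sym.
Qed.
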